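(* Let $N\ge2$, $R>0$, let $g:[0,R]\to(0,\infty)$ be smooth, and let $A,B,p,q$ be positive constants with $0<A<B$, all independent of $\epsilon$. For $\epsilon>0$ let $U_\epsilon$ be the unique solution of problem (N* ) described in the context. Then for every $\kappa\in(0,1)$ there is a constant $\widetilde C_{10}>0$ independent of $\epsilon$ such that for all sufficiently small $\epsilon>0$, $$\Big|\int_0^Rs^{N-1}e^{pU_\epsilon(s)}ds-\frac{R^N}{N}\Big|+\Big|\int_0^Rs^{N-1}e^{-qU_\epsilon(s)}ds-\frac{BR^N}{AN}\Big|\le\widetilde C_{10}\,\epsilon^\kappa\log\frac1\epsilon.$$
   Context: Problem (N* ): for $\epsilon>0$, find $U_\epsilon\in C^1([0,R])\cap C^\infty((0,R))$ such that for $r\in(0,R)$ $$\epsilon^2 g(r)\Big[U_\epsilon''(r)+\Big(\frac{N-1}{r}+\frac{g'(r)}{g(r)}\Big)U_\epsilon'(r)\Big]=\frac{R^N}{N}\Big(\frac{Ae^{pU_\epsilon(r)}}{\int_0^R s^{N-1}e^{pU_\epsilon(s)}ds}-\frac{Be^{-qU_\epsilon(r)}}{\int_0^R s^{N-1}e^{-qU_\epsilon(s)}ds}\Big),$$ together with $\int_0^R s^{N-1}U_\epsilon(s)\,ds=0$, $U_\epsilon'(0)=0$ and $U_\epsilon'(R)=\frac{R(A-B)}{\epsilon^2Ng(R)}$; it has a unique solution. *)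

From Stdlib Require Import Reals.
From Coquelicot Require Import Coquelicot.
Open Scope R_scope.

Definition Icc (a b x : R) : Prop := a <= x <= b.

Definition has_deriv_within (D : R -> Prop) (f : R -> R) (x l : R) : Prop :=
  filterlim (fun y => (f y - f x) / (y - x))
            (within (fun y => D y /\ y <> x) (locally x)) (locally l).

Definition C1_on_closed (Rr : R) (f dU : R -> R) : Prop :=
  (forall x, Icc 0 Rr x -> has_deriv_within (Icc 0 Rr) f x (dU x)) /\
  (forall x, Icc 0 Rr x -> filterlim dU (within (Icc 0 Rr) (locally x)) (locally (dU x))).

Definition smooth_open (a b : R) (f : R -> R) : Prop :=
  forall (n : nat) (x : R), a < x < b -> ex_derive_n f n x.

Definition smooth_closed (a b : R) (g : R -> R) : Prop :=
  exists d : R, 0 < d /\ smooth_open (a - d) (b + d) g.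

Definition Ip (N : nat) (Rr p : R) (U : R -> R) : R :=
  RInt (fun s => s ^ (N - 1) * exp (p * U s)) 0 Rr.
Definition Iq (N : nat) (Rr q : R) (U : R -> R) : R :=
  RInt (fun s => s ^ (N - 1) * exp (- (q * U s))) 0 Rr.

Definition solves_Nstar (N : nat) (Rr A B p q : R) (g : R -> R) (eps : R) (U : R -> R) : Prop :=
  (exists dU : R -> R,
      C1_on_closed Rr U dU /\ dU 0 = 0 /\
      dU Rr = Rr * (A - B) / (eps ^ 2 * INR N * g Rr)) /\
  smooth_open 0 Rr U /\
  (forall r, 0 < r < Rr ->
     eps ^ 2 * g r * (Derive_n U 2 r + ((INR N - 1) / r + Derive g r / g r) * Derive U r)
     = Rr ^ N / INR N *
       (A * exp (p * U r) / Ip N Rr p U - B * exp (- (q * U r)) / Iq N Rr q U)) /\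
  RInt (fun s => s ^ (N - 1) * U s) 0 Rr = 0.

From Stdlib Require Import Reals Lra Lia.
From Coquelicot Require Import Coquelicot.
Open Scope R_scope.

(* Write [V = s^(N-1) g U'] for the flux, so that (N* ) reads
   [V' = s^(N-1) eps^(-2) f(U)] with [f u = lam e^(pu) - mu e^(-qu)] increasing,
   [V(0) = 0] and [V(R) = -(B - A) R^N / (N eps^2) < 0].  A maximum principle gives
   [f(U) <= 0]; hence [V <= 0], [U] is nonincreasing and stays below the zero [us] of [f].
   Jensen's inequality bounds both integrals below by [R^N / N], which turns this into
   [f u <= -A (e^(q (us - u)) - 1) <= -A q (us - u)].  In a boundary layer of width
   [O(eps^2)] the first bound gives [us - U(R) = O(log (1/eps))]; further inside, the
   second one makes the gap [us - U] grow by a factor [1 + c eps^(-2) h^2] over each step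
   of length [h], so after [k] steps of length [eps^kappa / k] the gap at [R - eps^kappa]
   is [O(eps^kappa log (1/eps))].  As [U] has weighted mean zero, [us] is bounded by these
   two gaps, and both integrals are within [O(us)] of their limits. *)

(** * Calculus on a closed interval *)

Definition clamp (a b x : R) : R := Rmax a (Rmin b x).

(* Continuity on [a, b], one-sided at the endpoints, expressed as continuity
   on all of R of the extension of [h] that is constant outside [a, b]. *)
Definition cont_Icc (a b : R) (h : R -> R) : Prop :=
  forall x, continuity_pt (fun y => h (clamp a b y)) x.

Lemma clamp_in a b x : a <= b -> a <= clamp a b x <= b.
Proof. intros; unfold clamp, Rmax, Rmin; repeat destruct Rle_dec; lra. Qed.

Lemma clamp_id a b x : a <= x <= b -> clamp a b x = x.
Proof. intros; unfold clamp, Rmax, Rmin; repeat destruct Rle_dec; lra. Qed.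

Lemma clamp_lipschitz a b x y : a <= b -> Rabs (clamp a b y - clamp a b x) <= Rabs (y - x).
Proof.
  intros; unfold clamp, Rmax, Rmin, Rabs.
  repeat destruct Rle_dec; repeat destruct Rcase_abs; lra.
Qed.

Lemma continuity_pt_clamp a b x : a <= b -> continuity_pt (clamp a b) x.
Proof.
  intros Hab. apply continuity_pt_filterlim, filterlim_locally. intros eps.
  exists eps. intros y Hy.
  exact (Rle_lt_trans _ _ _ (clamp_lipschitz a b x y Hab) Hy).
Qed.

Lemma continuity_pt_exp_comp f x : continuity_pt f x -> continuity_pt (fun y => exp (f y)) x.
Proof.
  intros H. apply (continuity_pt_comp f exp x H).
  apply derivable_continuous_pt, derivable_pt_exp.
Qed.

Lemma continuity_pt_pow_comp f k x : continuity_pt f x -> continuity_pt (fun y => f y ^ k) x.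
Proof.
  intros H. induction k as [|k IH]; simpl.
  - apply continuity_pt_const. intros ? ?; reflexivity.
  - apply continuity_pt_mult; assumption.
Qed.

Ltac continuity_tac :=
  repeat first
    [ apply continuity_pt_plus | apply continuity_pt_minus | apply continuity_pt_opp
    | apply continuity_pt_mult | apply continuity_pt_exp_comp
    | apply continuity_pt_pow_comp | apply continuity_pt_id
    | apply continuity_pt_const; intros ? ?; reflexivity
    | apply continuity_pt_clamp; lra
    | assumption
    | match goal with
      | H : forall x, continuity_pt ?f x |- continuity_pt ?f _ => apply H
      | H : cont_Icc ?a ?b ?h |- continuity_pt (fun y => ?h (clamp ?a ?b y)) _ => apply H
      end ].

Lemma cont_Icc_of_within (h : R -> R) a b : a <= b ->
  (forall x, Icc a b x -> filterlim h (within (Icc a b) (locally x)) (locally (h x))) ->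
  cont_Icc a b h.
Proof.
  intros Hab H x. apply continuity_pt_filterlim, filterlim_locally. intros eps.
  destruct (proj1 (filterlim_locally _ _) (H _ (clamp_in a b x Hab)) eps) as [d Hd].
  exists d. intros y Hy. apply Hd.
  - exact (Rle_lt_trans _ _ _ (clamp_lipschitz a b x y Hab) Hy).
  - exact (clamp_in a b y Hab).
Qed.

Lemma has_deriv_within_continuous (D : R -> Prop) f x l :
  has_deriv_within D f x l -> filterlim f (within D (locally x)) (locally (f x)).
Proof.
  intros H. apply filterlim_locally. intros eps.
  destruct (proj1 (filterlim_locally _ _) H (mkposreal 1 Rlt_0_1)) as [d1 Hd1].
  assert (Hp : 0 < Rmin d1 (eps / (Rabs l + 1))).
  { apply Rmin_pos; [apply cond_pos|].
    apply Rdiv_lt_0_compat; [apply cond_pos|pose proof (Rabs_pos l); lra]. }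
  exists (mkposreal _ Hp). intros y Hy HD. simpl in Hy. change (Rabs (f y - f x) < eps).
  destruct (Req_dec y x) as [->|Hne].
  { rewrite Rminus_diag, Rabs_R0. apply cond_pos. }
  assert (Hq : Rabs ((f y - f x) / (y - x)) <= Rabs l + 1).
  { assert (Hb : ball x d1 y) by exact (Rlt_le_trans _ _ _ Hy (Rmin_l _ _)).
    specialize (Hd1 y Hb (conj HD Hne)). change (Rabs ((f y - f x) / (y - x) - l) < 1) in Hd1.
    pose proof (Rabs_triang_inv ((f y - f x) / (y - x)) l). lra. }
  assert (Hy2 : Rabs (y - x) < eps / (Rabs l + 1)) by exact (Rlt_le_trans _ _ _ Hy (Rmin_r _ _)).
  replace (f y - f x) with ((f y - f x) / (y - x) * (y - x)) by (field; lra).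
  rewrite Rabs_mult. pose proof (Rabs_pos l). pose proof (Rabs_pos (y - x)).
  apply Rle_lt_trans with ((Rabs l + 1) * Rabs (y - x)); [apply Rmult_le_compat_r; lra|].
  replace (pos eps) with ((Rabs l + 1) * (eps / (Rabs l + 1))) by (field; lra).
  apply Rmult_lt_compat_l; lra.
Qed.

Lemma has_deriv_within_Icc_interior f a b x l : a < x < b ->
  has_deriv_within (Icc a b) f x l -> is_derive f x l.
Proof.
  intros Hx H. apply is_derive_Reals. intros eps Heps.
  destruct (proj1 (filterlim_locally _ _) H (mkposreal eps Heps)) as [d1 Hd1].
  assert (Hp : 0 < Rmin d1 (Rmin (x - a) (b - x)))
    by (apply Rmin_pos; [apply cond_pos|apply Rmin_pos; lra]).
  exists (mkposreal _ Hp). intros h Hh0 Hh. simpl in Hh.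
  pose proof (Rmin_l d1 (Rmin (x - a) (b - x))). pose proof (Rmin_r d1 (Rmin (x - a) (b - x))).
  pose proof (Rmin_l (x - a) (b - x)). pose proof (Rmin_r (x - a) (b - x)).
  assert (Hb : ball x d1 (x + h))
    by (change (Rabs (x + h - x) < d1); replace (x + h - x) with h by ring; lra).
  assert (HI : Icc a b (x + h) /\ x + h <> x)
    by (destruct (Rabs_def2 h _ Hh); split; [split|]; lra).
  specialize (Hd1 _ Hb HI). change (Rabs ((f (x + h) - f x) / (x + h - x) - l) < eps) in Hd1.
  replace (x + h - x) with h in Hd1 by ring. exact Hd1.
Qed.

Lemma has_deriv_within_neg_right_end f a b l : a < b -> l < 0 ->
  has_deriv_within (Icc a b) f b l -> exists y, a <= y < b /\ f b < f y.
Proof.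
  intros Hab Hl H.
  assert (He : 0 < - l / 2) by lra.
  destruct (proj1 (filterlim_locally _ _) H (mkposreal _ He)) as [d Hd].
  pose proof (cond_pos d). pose proof (Rmin_l d (b - a)). pose proof (Rmin_r d (b - a)).
  assert (Hm : 0 < Rmin d (b - a)) by (apply Rmin_pos; lra).
  set (y := b - Rmin d (b - a) / 2).
  exists y. split; [unfold y; lra|].
  assert (Hb : ball b d y) by (change (Rabs (y - b) < d); rewrite Rabs_left; unfold y; lra).
  assert (HI : Icc a b y /\ y <> b) by (unfold Icc, y; split; [split|]; lra).
  specialize (Hd y Hb HI). change (Rabs ((f y - f b) / (y - b) - l) < - l / 2) in Hd.
  destruct (Rabs_def2 _ _ Hd) as [Hd1 _].
  assert (Hq : (f y - f b) / (y - b) < 0) by lra.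
  assert (Hyb : y - b < 0) by (unfold y; lra).
  assert (Hprod : 0 < (f y - f b) / (y - b) * (y - b)) by nra.
  replace ((f y - f b) / (y - b) * (y - b)) with (f y - f b) in Hprod by (field; lra).
  lra.
Qed.

Lemma exp_le_exp x y : x <= y -> exp x <= exp y.
Proof. intros [H|H]; [left; apply exp_increasing, H|rewrite H; lra]. Qed.

Lemma exp_le_inv x y : exp x <= exp y -> x <= y.
Proof.
  intros H. destruct (Rle_dec x y) as [|Hn]; [assumption|].
  assert (exp y < exp x) by (apply exp_increasing; lra). lra.
Qed.

Lemma MVT_strict (h h' : R -> R) a b : a < b ->
  (forall x, a < x < b -> is_derive h x (h' x)) ->
  (forall x, a <= x <= b -> continuity_pt h x) ->
  exists c, a < c < b /\ h b - h a = h' c * (b - a).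
Proof.
  intros Hab Hd Hc.
  assert (pr : forall c, a < c < b -> derivable_pt h c)
    by (intros c Hc'; exists (h' c); apply is_derive_Reals, Hd, Hc').
  destruct (MVT h id a b pr (fun c _ => derivable_pt_id c) Hab Hc) as [c [P HP]].
  { intros. apply continuity_pt_id. }
  exists c. split; [exact P|].
  rewrite (derive_pt_eq_0 h c (h' c) (pr c P)) in HP by (apply is_derive_Reals, Hd, P).
  rewrite (derive_pt_eq_0 id c 1 _) in HP by apply derivable_pt_lim_id.
  unfold id in HP. lra.
Qed.

Lemma MVT_Icc (h h' : R -> R) lo hi a b : cont_Icc lo hi h -> lo <= a -> a < b -> b <= hi ->
  (forall x, a < x < b -> is_derive h x (h' x)) ->
  exists c, a < c < b /\ h b - h a = h' c * (b - a).
Proof.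
  intros Hc Hla Hab Hbh Hd.
  destruct (MVT_strict (fun y => h (clamp lo hi y)) h' a b Hab) as [c [Pc Hc']].
  - intros x Hx. apply is_derive_ext_loc with h; [|apply Hd, Hx].
    assert (Hp : 0 < Rmin (x - a) (b - x)) by (apply Rmin_pos; lra).
    exists (mkposreal _ Hp). intros y Hy. change (Rabs (y - x) < Rmin (x - a) (b - x)) in Hy.
    pose proof (Rmin_l (x - a) (b - x)). pose proof (Rmin_r (x - a) (b - x)).
    destruct (Rabs_def2 _ _ Hy). rewrite clamp_id; [reflexivity|lra].
  - intros x _. apply Hc.
  - exists c. split; [exact Pc|]. rewrite !clamp_id in Hc' by lra. exact Hc'.
Qed.

Lemma nonincreasing_Icc (h h' : R -> R) lo hi a b : cont_Icc lo hi h ->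
  lo <= a -> a <= b -> b <= hi ->
  (forall x, a < x < b -> is_derive h x (h' x)) -> (forall x, a < x < b -> h' x <= 0) ->
  h b <= h a.
Proof.
  intros Hc Hla Hab Hbh Hd Hn. destruct (Req_dec a b) as [->|Hne]; [lra|].
  destruct (MVT_Icc h h' lo hi a b Hc) as [c [Hc1 Hc2]]; try lra; auto.
  assert (h' c * (b - a) <= 0) by (apply Rmult_le_0_r; [apply Hn|]; lra). lra.
Qed.

Lemma is_derive_local_max f a b x l : a < x < b -> is_derive f x l ->
  (forall y, a < y < b -> f y <= f x) -> l = 0.
Proof.
  intros Hx Hd Hm.
  assert (pr : derivable_pt f x) by (exists l; apply is_derive_Reals, Hd).
  rewrite <- (derive_pt_eq_0 f x l pr) by apply is_derive_Reals, Hd.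
  apply (deriv_maximum f a b x pr); try lra. intros; apply Hm; lra.
Qed.

Lemma growth_iterate (D : R -> R) c r0 Rr :
  (forall r s, r0 <= r -> r < s -> s <= Rr -> D r * (1 + c * (s - r) ^ 2) <= D s) ->
  0 <= c -> forall k h r1, 0 < h -> r0 <= r1 -> r1 + INR k * h <= Rr ->
  D r1 * (1 + c * h ^ 2) ^ k <= D (r1 + INR k * h).
Proof.
  intros Hd Hc k. induction k as [|k IH]; intros h r1 Hh Hr1 Hk.
  - simpl. replace (r1 + 0 * h) with r1 by ring. lra.
  - rewrite S_INR in *. rewrite <- tech_pow_Rmult.
    pose proof (pos_INR k).
    assert (H1 := IH h r1 Hh Hr1 ltac:(nra)).
    assert (H2 := Hd (r1 + INR k * h) (r1 + (INR k + 1) * h) ltac:(nra) ltac:(nra) Hk).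
    replace (r1 + (INR k + 1) * h - (r1 + INR k * h)) with h in H2 by ring.
    assert (0 <= 1 + c * h ^ 2) by (pose proof (pow2_ge_0 h); nra).
    replace (D r1 * ((1 + c * h ^ 2) * (1 + c * h ^ 2) ^ k)) with
      (D r1 * (1 + c * h ^ 2) ^ k * (1 + c * h ^ 2)) by ring.
    eapply Rle_trans; [|exact H2]. apply Rmult_le_compat_r; assumption.
Qed.

(** * Comparison principles for the radial equation *)

Section RadialComparison.

Variables (Rr : R) (U dU V m w f : R -> R).

(* For (N* ): [m = s^(N-1) g], [w = s^(N-1) / eps^2], and [V = m U'] is the flux. *)
Record radial_flux : Prop := {
  rf_R : 0 < Rr;
  rf_Uc : cont_Icc 0 Rr U;
  rf_Vc : cont_Icc 0 Rr V;
  rf_Ud : forall x, 0 < x < Rr -> is_derive U x (dU x);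
  rf_Vd : forall x, 0 < x < Rr -> is_derive V x (w x * f (U x));
  rf_Vm : forall x, 0 < x < Rr -> V x = m x * dU x;
  rf_w : forall x, 0 < x < Rr -> 0 < w x;
  rf_m : forall x, 0 < x < Rr -> 0 < m x;
  rf_V0 : V 0 = 0;
  rf_f_mono : forall u v, u <= v -> f u <= f v;
  rf_f_cont : forall u, continuity_pt f u;
  rf_R_not_max : exists y, 0 <= y < Rr /\ U Rr < U y }.

Hypothesis P : radial_flux.

Let HR := rf_R P.
Let HUc := rf_Uc P.
Let HVc := rf_Vc P.
Let HUd := rf_Ud P.
Let HVd := rf_Vd P.
Let HVm := rf_Vm P.
Let Hw := rf_w P.
Let Hm := rf_m P.
Let Hf_mono := rf_f_mono P.

(* If [f (U x0)] were positive, [V] and hence [U] would increase just right of [x0]. *)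
Lemma f_nonpos_at_max x0 : 0 <= x0 < Rr ->
  (forall x, 0 <= x <= Rr -> U x <= U x0) -> f (U x0) <= 0.
Proof.
  intros Hx0 Hmax.
  destruct (Rle_dec (f (U x0)) 0) as [|Hgt]; [assumption|exfalso].
  assert (HVx0 : V x0 = 0).
  { destruct (Req_dec x0 0) as [->|Hx0n]; [exact (rf_V0 P)|].
    rewrite HVm by lra.
    rewrite (is_derive_local_max U 0 Rr x0 (dU x0)); [ring|lra|apply HUd; lra|].
    intros; apply Hmax; lra. }
  assert (He : 0 < f (U x0) / 2) by lra.
  assert (HfUc : continuity_pt (fun y => f (U (clamp 0 Rr y))) x0)
    by exact (continuity_pt_comp _ f x0 (HUc x0) (rf_f_cont P _)).
  destruct (proj1 (filterlim_locally _ _) (proj1 (continuity_pt_filterlim _ _) HfUc)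
    (mkposreal _ He)) as [d Hd].
  pose proof (cond_pos d). pose proof (Rmin_l d (Rr - x0)). pose proof (Rmin_r d (Rr - x0)).
  assert (HfUpos : forall c, x0 <= c < x0 + d -> c <= Rr -> 0 < f (U c)).
  { intros c Hc Hc2.
    assert (Hb : ball x0 d c) by (change (Rabs (c - x0) < d); rewrite Rabs_right; lra).
    specialize (Hd c Hb).
    change (Rabs (f (U (clamp 0 Rr c)) - f (U (clamp 0 Rr x0))) < f (U x0) / 2) in Hd.
    rewrite !clamp_id in Hd by lra. destruct (Rabs_def2 _ _ Hd). lra. }
  assert (Hm0 : 0 < Rmin d (Rr - x0)) by (apply Rmin_pos; lra).
  set (y1 := x0 + Rmin d (Rr - x0) / 2).
  assert (HdUpos : forall z, x0 < z <= y1 -> 0 < dU z).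
  { intros z Hz. unfold y1 in Hz.
    destruct (MVT_Icc V (fun x => w x * f (U x)) 0 Rr x0 z HVc) as [c [Hc Hc']]; try lra.
    { intros t Ht. apply HVd. lra. }
    assert (0 < w c) by (apply Hw; lra).
    assert (0 < f (U c)) by (apply HfUpos; lra).
    assert (0 < w c * f (U c) * (z - x0)) by (repeat apply Rmult_lt_0_compat; lra).
    assert (0 < m z) by (apply Hm; lra).
    rewrite HVm in Hc' by lra.
    destruct (Rle_dec (dU z) 0) as [Hn|]; [|lra].
    assert (m z * dU z <= 0) by (apply Rmult_le_0_l; lra). lra. }
  destruct (MVT_Icc U dU 0 Rr x0 y1 HUc) as [c [Hc Hc']]; try (unfold y1; lra).
  { intros z Hz. apply HUd. unfold y1 in *; lra. }
  assert (0 < dU c * (y1 - x0)) by (apply Rmult_lt_0_compat; [apply HdUpos|]; lra).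
  assert (U y1 <= U x0) by (apply Hmax; unfold y1; lra).
  lra.
Qed.

Lemma f_U_nonpos x : 0 <= x <= Rr -> f (U x) <= 0.
Proof.
  intros Hx.
  destruct (continuity_ab_maj (fun y => U (clamp 0 Rr y)) 0 Rr) as [x0 [Hmax Hx0]];
    [lra|intros; apply HUc|].
  assert (Hmax' : forall c, 0 <= c <= Rr -> U c <= U x0).
  { intros c Hc. specialize (Hmax c Hc). simpl in Hmax.
    rewrite !clamp_id in Hmax by lra. exact Hmax. }
  assert (Hx0R : x0 <> Rr).
  { intros ->. destruct (rf_R_not_max P) as [y [Hy HUy]].
    assert (U y <= U Rr) by (apply Hmax'; lra). lra. }
  apply Rle_trans with (f (U x0)).
  - apply Hf_mono, Hmax', Hx.
  - apply f_nonpos_at_max; [lra|exact Hmax'].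
Qed.

Lemma V_nonincreasing x y : 0 <= x -> x <= y -> y <= Rr -> V y <= V x.
Proof.
  intros H1 H2 H3. apply (nonincreasing_Icc V (fun t => w t * f (U t)) 0 Rr x y HVc); auto.
  - intros t Ht. apply HVd; lra.
  - intros t Ht. assert (0 < w t) by (apply Hw; lra).
    assert (f (U t) <= 0) by (apply f_U_nonpos; lra). nra.
Qed.

Lemma V_nonpos x : 0 <= x <= Rr -> V x <= 0.
Proof. intros Hx. rewrite <- (rf_V0 P). apply V_nonincreasing; lra. Qed.

Lemma U_nonincreasing x y : 0 <= x -> x <= y -> y <= Rr -> U y <= U x.
Proof.
  intros H1 H2 H3. apply (nonincreasing_Icc U dU 0 Rr x y HUc); auto.
  - intros t Ht. apply HUd; lra.
  - intros t Ht. assert (HV := V_nonpos t ltac:(lra)). assert (0 < m t) by (apply Hm; lra).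
    rewrite HVm in HV by lra. destruct (Rle_dec (dU t) 0) as [|Hn]; [assumption|].
    assert (0 < m t * dU t) by (apply Rmult_lt_0_compat; lra). lra.
Qed.

Lemma U_drop_le_flux t1 mmin : 0 < t1 < Rr -> 0 < mmin ->
  (forall x, t1 <= x < Rr -> mmin <= m x) -> U t1 - U Rr <= - V Rr / mmin * (Rr - t1).
Proof.
  intros Ht1 Hmmin Hm1.
  destruct (MVT_Icc U dU 0 Rr t1 Rr HUc) as [c [Hc Hc']]; try lra.
  { intros z Hz. apply HUd. lra. }
  assert (HVc' : V Rr <= m c * dU c) by (rewrite <- HVm by lra; apply V_nonincreasing; lra).
  assert (HVR : V Rr <= 0) by (apply V_nonpos; lra).
  assert (Hmc : mmin <= m c) by (apply Hm1; lra).
  assert (HdU : - dU c <= - V Rr / mmin).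
  { apply Rmult_le_reg_l with mmin; [lra|].
    replace (mmin * (- V Rr / mmin)) with (- V Rr) by (field; lra).
    destruct (Rle_dec (dU c) 0); nra. }
  assert (- dU c * (Rr - t1) <= - V Rr / mmin * (Rr - t1)) by (apply Rmult_le_compat_r; lra).
  lra.
Qed.

Lemma flux_ge_layer t1 w0 : 0 < t1 < Rr -> 0 <= w0 ->
  (forall x, t1 <= x < Rr -> w0 <= w x) -> w0 * - f (U t1) * (Rr - t1) <= - V Rr.
Proof.
  intros Ht1 Hw0 Hw1.
  destruct (MVT_Icc V (fun x => w x * f (U x)) 0 Rr t1 Rr HVc) as [c [Hc Hc']]; try lra.
  { intros z Hz. apply HVd. lra. }
  assert (w0 <= w c) by (apply Hw1; lra).
  assert (f (U c) <= 0) by (apply f_U_nonpos; lra).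
  assert (f (U c) <= f (U t1)) by (apply Hf_mono, U_nonincreasing; lra).
  assert (V t1 <= 0) by (apply V_nonpos; lra).
  assert (w c * f (U c) <= w0 * f (U t1)) by nra.
  assert (w c * f (U c) * (Rr - t1) <= w0 * f (U t1) * (Rr - t1)) by (apply Rmult_le_compat_r; lra).
  lra.
Qed.

Section Growth.

Variables (r0 w0 Mm us a : R).

Hypotheses
  (Hr0 : 0 <= r0) (Hw0 : 0 <= w0) (Ha : 0 <= a)
  (HMm : forall x, 0 < x < Rr -> m x <= Mm)
  (Hw1 : forall x, r0 <= x < Rr -> w0 <= w x)
  (HUus : forall x, 0 <= x <= Rr -> U x <= us)
  (Hf_lin : forall u, u <= us -> f u <= - a * (us - u)).

Lemma dU_le_gap r t : r0 <= r -> r < t < Rr ->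
  dU t <= - (w0 * a * (us - U r) / Mm) * (t - r).
Proof.
  intros Hr Ht.
  assert (Hmt : 0 < m t <= Mm) by (split; [apply Hm|apply HMm]; lra).
  assert (HDr : 0 <= us - U r) by (assert (U r <= us) by (apply HUus; lra); lra).
  destruct (MVT_Icc V (fun x => w x * f (U x)) 0 Rr r t HVc) as [c [Hc Hc']]; try lra.
  { intros z Hz. apply HVd. lra. }
  assert (Hfc : f (U c) <= - (a * (us - U r))).
  { assert (U c <= U r) by (apply U_nonincreasing; lra).
    eapply Rle_trans; [apply Hf_lin, HUus; lra|]. nra. }
  assert (w0 <= w c) by (apply Hw1; lra).
  assert (0 <= a * (us - U r)) by nra.
  assert (w c * f (U c) <= w0 * f (U c)) by nra.
  assert (w c * f (U c) <= - (w0 * (a * (us - U r)))) by nra.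
  assert (w c * f (U c) * (t - r) <= - (w0 * (a * (us - U r))) * (t - r))
    by (apply Rmult_le_compat_r; lra).
  assert (V r <= 0) by (apply V_nonpos; lra).
  rewrite HVm in Hc' by lra.
  assert (Hk : 0 <= w0 * a * (us - U r) / Mm) by (apply Rdiv_le_0_compat; nra).
  set (k := w0 * a * (us - U r) / Mm) in *.
  assert (E : w0 * (a * (us - U r)) = k * Mm) by (unfold k; field; lra).
  assert (k * m t * (t - r) <= k * Mm * (t - r))
    by (apply Rmult_le_compat_r; [|apply Rmult_le_compat_l]; lra).
  assert (m t * (dU t + k * (t - r)) <= 0).
  { replace (m t * (dU t + k * (t - r))) with (m t * dU t + k * m t * (t - r)) by ring.
    rewrite E in *. lra. }
  destruct (Rle_dec (dU t + k * (t - r)) 0); [lra|].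
  assert (0 < m t * (dU t + k * (t - r))) by (apply Rmult_lt_0_compat; lra). lra.
Qed.

(* By [dU_le_gap], [U] lies below a downward parabola with vertex [(r, U r)]. *)
Lemma gap_growth r s : r0 <= r -> r < s -> s <= Rr ->
  (us - U r) * (1 + w0 * a / (2 * Mm) * (s - r) ^ 2) <= us - U s.
Proof.
  intros Hr Hrs Hs.
  assert (HMm0 : 0 < Mm) by (apply Rlt_le_trans with (m ((r + s) / 2)); [apply Hm|apply HMm]; lra).
  set (k := w0 * a * (us - U r) / Mm).
  assert (Hc : cont_Icc 0 Rr (fun t => U t + k * (t - r) ^ 2 / 2))
    by (intros x; continuity_tac).
  assert (H := nonincreasing_Icc _ (fun t => dU t + k * (t - r)) 0 Rr r s Hc
    ltac:(lra) ltac:(lra) ltac:(lra)).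
  simpl in H.
  assert (H' : U s + k * ((s - r) * ((s - r) * 1)) / 2 <= U r + k * ((r - r) * ((r - r) * 1)) / 2).
  { apply H.
    - intros x Hx. apply (is_derive_plus U (fun t => k * (t - r) ^ 2 / 2)); [apply HUd; lra|].
      auto_derive; [exact I|]. field.
    - intros t Ht. pose proof (dU_le_gap r t Hr ltac:(lra)). fold k in H0. lra. }
  assert (E : (us - U r) * (1 + w0 * a / (2 * Mm) * (s - r) ^ 2) =
    us - U r + k * ((s - r) * ((s - r) * 1)) / 2) by (unfold k; simpl; field; lra).
  rewrite E. clearbody k. lra.
Qed.

End Growth.

End RadialComparison.

(** * Weighted integrals *)

Lemma ex_RInt_cont_Icc h a b : a <= b -> cont_Icc a b h -> ex_RInt h a b.
Proof.
  intros Hab Hc. apply ex_RInt_ext with (fun y => h (clamp a b y)).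
  - intros x Hx. rewrite Rmin_left, Rmax_right in Hx by lra. rewrite clamp_id; [reflexivity|lra].
  - apply (ex_RInt_continuous (V := R_CompleteNormedModule)).
    intros z _. apply continuity_pt_filterlim, Hc.
Qed.

Ltac ex_RInt_tac := apply ex_RInt_cont_Icc; [lra|]; intros ?; cbv beta; continuity_tac.

Lemma is_RInt_pow_0 k Rr : is_RInt (fun s => s ^ k) 0 Rr (Rr ^ S k / INR (S k)).
Proof.
  replace (Rr ^ S k / INR (S k)) with (Rr ^ S k / INR (S k) - 0 ^ S k / INR (S k)).
  - apply is_RInt_pow.
  - simpl. unfold Rdiv. ring.
Qed.

Section WeightedIntegrals.

Variables (k : nat) (Rr : R) (U : R -> R).

Hypotheses (HR : 0 < Rr) (HUc : cont_Icc 0 Rr U).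

Lemma RInt_weighted_exp_le c us : 0 <= c -> (forall x, 0 <= x <= Rr -> U x <= us) ->
  RInt (fun s => s ^ k * exp (c * U s)) 0 Rr <= exp (c * us) * (Rr ^ S k / INR (S k)).
Proof.
  intros Hc Hus.
  assert (H : is_RInt (fun s => exp (c * us) * s ^ k) 0 Rr (exp (c * us) * (Rr ^ S k / INR (S k))))
    by exact (is_RInt_scal _ _ _ _ _ (is_RInt_pow_0 k Rr)).
  rewrite <- (is_RInt_unique _ _ _ _ H).
  apply RInt_le; [lra|ex_RInt_tac|eexists; exact H|].
  intros x Hx.
  assert (exp (c * U x) <= exp (c * us))
    by (apply exp_le_exp, Rmult_le_compat_l; [|apply Hus]; lra).
  assert (0 <= x ^ k) by (apply pow_le; lra). nra.
Qed.

Hypothesis HUint : RInt (fun s => s ^ k * U s) 0 Rr = 0.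

Lemma is_RInt_weighted : is_RInt (fun s => s ^ k * U s) 0 Rr 0.
Proof.
  assert (H : ex_RInt (fun s => s ^ k * U s) 0 Rr) by ex_RInt_tac.
  apply (RInt_correct (V := R_CompleteNormedModule)) in H. rewrite HUint in H. exact H.
Qed.

(* Jensen's inequality, via [exp x >= 1 + x]. *)
Lemma RInt_weighted_exp_ge c :
  Rr ^ S k / INR (S k) <= RInt (fun s => s ^ k * exp (c * U s)) 0 Rr.
Proof.
  assert (H : is_RInt (fun y => y ^ k + c * (y ^ k * U y)) 0 Rr (Rr ^ S k / INR (S k) + c * 0))
    by exact (is_RInt_plus _ _ _ _ _ _ (is_RInt_pow_0 k Rr)
                (is_RInt_scal _ _ _ c _ is_RInt_weighted)).
  apply Rle_trans with (RInt (fun y => y ^ k + c * (y ^ k * U y)) 0 Rr).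
  - rewrite (is_RInt_unique _ _ _ _ H). lra.
  - apply RInt_le; [lra|eexists; exact H|ex_RInt_tac|].
    intros x Hx. assert (H1 := exp_ineq1_le (c * U x)).
    assert (0 <= x ^ k) by (apply pow_le; lra). nra.
Qed.

Lemma weighted_mean_gap us a : 0 < a < Rr ->
  (forall x, 0 <= x <= Rr -> U x <= us) ->
  (forall x y, 0 <= x -> x <= y -> y <= Rr -> U y <= U x) ->
  us * (Rr ^ S k / INR (S k)) <= Rr ^ k * (a * (us - U a) + (Rr - a) * (us - U Rr)).
Proof.
  intros Ha Hus Hdec.
  set (h := fun y => us * y ^ k - y ^ k * U y).
  assert (Hh : is_RInt h 0 Rr (us * (Rr ^ S k / INR (S k)))).
  { replace (us * (Rr ^ S k / INR (S k))) with (us * (Rr ^ S k / INR (S k)) - 0) by ring.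
    exact (is_RInt_minus _ _ _ _ _ _ (is_RInt_scal _ _ _ us _ (is_RInt_pow_0 k Rr))
      is_RInt_weighted). }
  assert (Hex : ex_RInt h 0 Rr) by (unfold h; ex_RInt_tac).
  assert (Hex1 : ex_RInt h 0 a)
    by (apply (ex_RInt_Chasles_1 (V := R_CompleteNormedModule)) with Rr; [lra|exact Hex]).
  assert (Hex2 : ex_RInt h a Rr)
    by (apply (ex_RInt_Chasles_2 (V := R_CompleteNormedModule)) with 0; [lra|exact Hex]).
  rewrite <- (is_RInt_unique _ _ _ _ Hh), <- (RInt_Chasles h 0 a Rr Hex1 Hex2).
  assert (Hbound : forall c x, 0 <= x <= c -> c <= Rr -> h x <= Rr ^ k * (us - U c)).
  { intros c x Hx Hc. unfold h.
    assert (U c <= U x) by (apply Hdec; lra). assert (U x <= us) by (apply Hus; lra).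
    assert (0 <= x ^ k <= Rr ^ k) by (split; [apply pow_le|apply pow_incr]; lra).
    replace (us * x ^ k - x ^ k * U x) with (x ^ k * (us - U x)) by ring.
    apply Rmult_le_compat; lra. }
  assert (I1 : RInt h 0 a <= RInt (fun _ => Rr ^ k * (us - U a)) 0 a).
  { apply RInt_le; [lra|exact Hex1|apply ex_RInt_const|].
    intros x Hx. apply Hbound; lra. }
  assert (I2 : RInt h a Rr <= RInt (fun _ => Rr ^ k * (us - U Rr)) a Rr).
  { apply RInt_le; [lra|exact Hex2|apply ex_RInt_const|].
    intros x Hx. apply Hbound; lra. }
  rewrite !RInt_const in I1, I2. change (RInt h 0 a + RInt h a Rr <=
    Rr ^ k * (a * (us - U a) + (Rr - a) * (us - U Rr))).
  change (RInt h 0 a <= (a - 0) * (Rr ^ k * (us - U a))) in I1.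
  change (RInt h a Rr <= (Rr - a) * (Rr ^ k * (us - U Rr))) in I2.
  lra.
Qed.

End WeightedIntegrals.

Lemma exp_pow x k : exp x ^ k = exp (INR k * x).
Proof.
  induction k as [|k IH]; simpl; [rewrite Rmult_0_l, exp_0; reflexivity|].
  rewrite IH, <- exp_plus. destruct k; simpl; f_equal; ring.
Qed.

Lemma exp_sub_1_le x : exp x - 1 <= x * exp x.
Proof.
  assert (H1 := exp_ineq1_le (- x)).
  assert (H2 : exp (- x) * exp x = 1) by (rewrite <- exp_plus, Rplus_opp_l; apply exp_0).
  assert (0 < exp x) by apply exp_pos.
  nra.
Qed.

(* [t e^(-t) <= 1] with [t = kappa ln (1/eps)]. *)
Lemma exp_mul_ln_le kappa eps : 0 < kappa -> 0 < eps ->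
  exp (kappa * ln eps) * ln (1 / eps) <= 1 / kappa.
Proof.
  intros Hk He.
  set (t := - (kappa * ln eps)).
  replace (kappa * ln eps) with (- t) by (unfold t; ring).
  replace (ln (1 / eps)) with (t / kappa)
    by (unfold t, Rdiv; rewrite Rmult_1_l, ln_Rinv by lra; field; lra).
  assert (H1 := exp_ineq1_le t).
  assert (H2 : exp (- t) * exp t = 1) by (rewrite <- exp_plus, Rplus_opp_l; apply exp_0).
  assert (0 < exp (- t)) by apply exp_pos.
  apply Rmult_le_reg_r with kappa; [lra|].
  replace (exp (- t) * (t / kappa) * kappa) with (exp (- t) * t) by (field; lra).
  replace (1 / kappa * kappa) with 1 by (field; lra).
  nra.
Qed.

Lemma is_derive_pow_mult k (g h : R -> R) x g' h' : is_derive g x g' -> is_derive h x h' ->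
  is_derive (fun y => y ^ S k * g y * h y) x
    (INR (S k) * x ^ k * g x * h x + x ^ S k * g' * h x + x ^ S k * g x * h').
Proof.
  intros Hg Hh.
  assert (Hp : is_derive (fun y => y ^ S k) x (INR (S k) * x ^ k)).
  { auto_derive; [exact I|]. simpl. ring. }
  assert (H := is_derive_mult _ _ _ _ _ (is_derive_mult _ _ _ _ _ Hp Hg Rmult_comm) Hh Rmult_comm).
  eapply is_derive_ext; [intros; reflexivity|].
  replace (INR (S k) * x ^ k * g x * h x + x ^ S k * g' * h x + x ^ S k * g x * h')
    with ((INR (S k) * x ^ k * g x + x ^ S k * g') * h x + x ^ S k * g x * h') by ring.
  exact H.
Qed.

Lemma nonlinearity_factor lam mu p q u : 0 < lam -> 0 < mu -> 0 < p -> 0 < q ->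
  let us := ln (mu / lam) / (p + q) in
  lam * exp (p * u) - mu * exp (- (q * u)) =
  - (lam * exp (p * us)) * (exp (q * (us - u)) - exp (- (p * (us - u)))).
Proof.
  intros Hl Hm Hp Hq us.
  assert (E1 : exp (p * us) * exp (q * (us - u)) = mu / lam * exp (- (q * u))).
  { rewrite <- exp_plus, <- (exp_ln (mu / lam)) by (apply Rdiv_lt_0_compat; lra).
    rewrite <- exp_plus. f_equal. unfold us. field. lra. }
  assert (E2 : exp (p * us) * exp (- (p * (us - u))) = exp (p * u))
    by (rewrite <- exp_plus; f_equal; ring).
  replace (- (lam * exp (p * us)) * (exp (q * (us - u)) - exp (- (p * (us - u)))))
    with (- lam * (exp (p * us) * exp (q * (us - u)))
          + lam * (exp (p * us) * exp (- (p * (us - u))))) by ring.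
  rewrite E1, E2. field. lra.
Qed.

(* Indexed by [n = N - 2], so that the weight [s^(N-1)] is [s^(S n)];
   [radial_volume n R = R^N / N] is the integral of the weight over [0, R]. *)
Definition radial_volume (n : nat) (Rr : R) : R := Rr ^ S (S n) / INR (S (S n)).

Definition flux (n : nat) (Rr A B : R) : R := (B - A) * radial_volume n Rr.

Definition coef_min (n : nat) (Rr gmin : R) : R := (Rr / 2) ^ S n * gmin.

Definition coef_max (n : nat) (Rr gmax : R) : R := Rr ^ S n * gmax.

Definition layer_const (n : nat) (Rr A B gmin : R) : R :=
  flux n Rr A B ^ 2 / ((Rr / 2) ^ S n * A * coef_min n Rr gmin).

Definition gap_const (n : nat) (Rr A B q gmin : R) : R :=
  1 + ln (1 + layer_const n Rr A B gmin) / q + 2 / q.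

Definition growth_rate (n : nat) (Rr A q gmax : R) : R :=
  (Rr / 2) ^ S n * A * q / (2 * coef_max n Rr gmax).

Definition iteration_const (n : nat) (Rr A q gmax : R) (kk : nat) : R :=
  (INR kk ^ 2 / growth_rate n Rr A q gmax) ^ kk.

Definition us_const (n : nat) (Rr A B q gmin gmax : R) (kk : nat) : R :=
  Rr ^ S n * (Rr * iteration_const n Rr A q gmax kk + 1) * gap_const n Rr A B q gmin
  / radial_volume n Rr.

Definition deviation_const (n : nat) (Rr A B p q gmin gmax : R) (kk : nat) (kappa : R) : R :=
  (radial_volume n Rr * p * exp (p * (us_const n Rr A B q gmin gmax kk / kappa))
   + B / A * radial_volume n Rr * (p + q)) * us_const n Rr A B q gmin gmax kk.

(** * Estimates for a solution of (N* ) *)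

Section Solution.

Variables (n : nat) (Rr A B p q eps gmin gmax : R) (g U dU : R -> R).

Hypotheses
  (HR : 0 < Rr) (HA : 0 < A) (HAB : A < B) (Hp : 0 < p) (Hq : 0 < q) (Heps : 0 < eps)
  (Hg : forall x, 0 <= x <= Rr -> gmin <= g x <= gmax) (Hgmin : 0 < gmin)
  (Hgd : forall x, 0 < x < Rr -> is_derive g x (Derive g x))
  (Hgc : cont_Icc 0 Rr g)
  (HdU : C1_on_closed Rr U dU)
  (HdUR : dU Rr = Rr * (A - B) / (eps ^ 2 * INR (S (S n)) * g Rr))
  (Hsm : smooth_open 0 Rr U)
  (Hode : forall r, 0 < r < Rr ->
     eps ^ 2 * g r * (Derive_n U 2 r + ((INR (S (S n)) - 1) / r + Derive g r / g r) * Derive U r)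
     = Rr ^ S (S n) / INR (S (S n)) *
       (A * exp (p * U r) / Ip (S (S n)) Rr p U - B * exp (- (q * U r)) / Iq (S (S n)) Rr q U))
  (HUint : RInt (fun s => s ^ S n * U s) 0 Rr = 0).

Let Om := radial_volume n Rr.
Let IP := Ip (S (S n)) Rr p U.
Let IQ := Iq (S (S n)) Rr q U.
Let lam := Om * A / IP.
Let mu := Om * B / IQ.
Let f (u : R) := lam * exp (p * u) - mu * exp (- (q * u)).
Let m (x : R) := x ^ S n * g x.
Let w (x : R) := x ^ S n / eps ^ 2.
Let V (x : R) := m x * dU x.

Lemma Om_pos : 0 < Om.
Proof. apply Rdiv_lt_0_compat; [apply pow_lt; lra|apply lt_0_INR; lia]. Qed.

Lemma g_pos x : 0 <= x <= Rr -> 0 < g x.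
Proof. intros Hx. destruct (Hg x Hx). lra. Qed.

Lemma U_cont : cont_Icc 0 Rr U.
Proof.
  apply cont_Icc_of_within; [lra|]. intros x Hx.
  exact (has_deriv_within_continuous _ _ _ _ (proj1 HdU x Hx)).
Qed.

Lemma dU_cont : cont_Icc 0 Rr dU.
Proof. apply cont_Icc_of_within; [lra|exact (proj2 HdU)]. Qed.

Lemma U_deriv x : 0 < x < Rr -> is_derive U x (dU x).
Proof.
  intros Hx. apply (has_deriv_within_Icc_interior U 0 Rr x _ Hx), (proj1 HdU).
  unfold Icc; lra.
Qed.

Lemma dU_deriv x : 0 < x < Rr -> is_derive dU x (Derive_n U 2 x).
Proof.
  intros Hx. apply is_derive_ext_loc with (Derive U).
  - assert (Hd : 0 < Rmin x (Rr - x)) by (apply Rmin_pos; lra).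
    exists (mkposreal _ Hd). intros y Hy. change (Rabs (y - x) < Rmin x (Rr - x)) in Hy.
    pose proof (Rmin_l x (Rr - x)). pose proof (Rmin_r x (Rr - x)). destruct (Rabs_def2 _ _ Hy).
    apply is_derive_unique, U_deriv. lra.
  - exact (Derive_correct _ _ (Hsm 2%nat x Hx)).
Qed.

Lemma IP_ge : Om <= IP.
Proof. exact (RInt_weighted_exp_ge (S n) Rr U HR U_cont HUint p). Qed.

Lemma IQ_ge : Om <= IQ.
Proof.
  unfold IQ, Iq. rewrite (RInt_ext _ (fun s => s ^ S n * exp (- q * U s))).
  - exact (RInt_weighted_exp_ge (S n) Rr U HR U_cont HUint (- q)).
  - intros x _. do 2 f_equal. ring.
Qed.

Lemma lam_pos : 0 < lam.
Proof. pose proof Om_pos. pose proof IP_ge. apply Rdiv_lt_0_compat; nra. Qed.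

Lemma mu_pos : 0 < mu.
Proof. pose proof Om_pos. pose proof IQ_ge. apply Rdiv_lt_0_compat; nra. Qed.

Lemma f_mono u v : u <= v -> f u <= f v.
Proof.
  intros Huv. pose proof lam_pos. pose proof mu_pos.
  assert (exp (p * u) <= exp (p * v)) by (apply exp_le_exp; nra).
  assert (exp (- (q * v)) <= exp (- (q * u))) by (apply exp_le_exp; nra).
  unfold f. nra.
Qed.

Lemma V_deriv x : 0 < x < Rr -> is_derive V x (w x * f (U x)).
Proof.
  intros Hx. pose proof (g_pos x ltac:(lra)). pose proof Om_pos.
  pose proof IP_ge. pose proof IQ_ge.
  assert (Hf : f (U x) = eps ^ 2 * g x *
      (Derive_n U 2 x + ((INR (S (S n)) - 1) / x + Derive g x / g x) * dU x)).
  { rewrite <- (is_derive_unique _ _ _ (U_deriv x Hx)), Hode by exact Hx.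
    unfold f, lam, mu, Om, IP, IQ, radial_volume in *. field. repeat split; try lra.
    apply not_0_INR; lia. }
  assert (E : w x * f (U x) = INR (S n) * x ^ n * g x * dU x + x ^ S n * Derive g x * dU x
      + x ^ S n * g x * Derive_n U 2 x).
  { rewrite Hf. unfold w. rewrite (S_INR (S n)). simpl. field. repeat split; lra. }
  rewrite E. unfold V, m.
  exact (is_derive_pow_mult n g dU x _ _ (Hgd x Hx) (dU_deriv x Hx)).
Qed.

Lemma V_Rr : V Rr = - flux n Rr A B / eps ^ 2.
Proof.
  pose proof (g_pos Rr ltac:(lra)).
  unfold V, m, flux, radial_volume. rewrite HdUR, <- (tech_pow_Rmult Rr (S n)). field.
  repeat split; try lra. apply not_0_INR; lia.
Qed.

Lemma solution_radial_flux : radial_flux Rr U dU V m w f.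
Proof.
  pose proof dU_cont as HdUc. pose proof U_cont as HUc.
  split.
  - exact HR.
  - exact HUc.
  - intros x. unfold V, m. continuity_tac.
  - exact U_deriv.
  - exact V_deriv.
  - reflexivity.
  - intros x Hx. apply Rdiv_lt_0_compat; apply pow_lt; lra.
  - intros x Hx. apply Rmult_lt_0_compat; [apply pow_lt|apply g_pos]; lra.
  - unfold V, m. simpl. ring.
  - exact f_mono.
  - intros u. unfold f. continuity_tac.
  - apply (has_deriv_within_neg_right_end U 0 Rr (dU Rr) HR).
    + pose proof (g_pos Rr ltac:(lra)). rewrite HdUR. unfold Rdiv.
      apply Rmult_neg_pos; [nra|]. apply Rinv_0_lt_compat.
      repeat apply Rmult_lt_0_compat; try (apply pow_lt); try lra. apply lt_0_INR; lia.
    + apply (proj1 HdU). unfold Icc; lra.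
Qed.

Let us := ln (mu / lam) / (p + q).

Lemma f_factor u :
  f u = - (lam * exp (p * us)) * (exp (q * (us - u)) - exp (- (p * (us - u)))).
Proof. exact (nonlinearity_factor lam mu p q u lam_pos mu_pos Hp Hq). Qed.

Lemma U_le_us x : 0 <= x <= Rr -> U x <= us.
Proof.
  intros Hx. assert (H := f_U_nonpos Rr U dU V m w f solution_radial_flux x Hx).
  rewrite f_factor in H.
  assert (0 < lam * exp (p * us)) by (apply Rmult_lt_0_compat; [apply lam_pos|apply exp_pos]).
  assert (Hle : exp (- (p * (us - U x))) <= exp (q * (us - U x))).
  { destruct (Rle_dec (exp (- (p * (us - U x)))) (exp (q * (us - U x)))) as [|Hn]; [assumption|].
    assert (0 < lam * exp (p * us) * (exp (- (p * (us - U x))) - exp (q * (us - U x))))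
      by (apply Rmult_lt_0_compat; lra).
    lra. }
  apply exp_le_inv in Hle. nra.
Qed.

Lemma IP_le : IP <= exp (p * us) * Om.
Proof. exact (RInt_weighted_exp_le (S n) Rr U HR U_cont p us (Rlt_le _ _ Hp) U_le_us). Qed.

Lemma us_nonneg : 0 <= us.
Proof.
  pose proof Om_pos. pose proof IP_ge. pose proof IP_le.
  assert (Hexp : exp 0 <= exp (p * us)) by (rewrite exp_0; nra).
  apply exp_le_inv in Hexp. nra.
Qed.

Lemma A_le_k0 : A <= lam * exp (p * us).
Proof.
  pose proof Om_pos. pose proof IP_ge. pose proof IP_le.
  unfold lam. apply Rmult_le_reg_r with IP; [lra|].
  replace (Om * A / IP * exp (p * us) * IP) with (A * (exp (p * us) * Om)) by (field; lra).
  apply Rmult_le_compat_l; lra.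
Qed.

Lemma f_le_exp_gap u : u <= us -> f u <= - (A * (exp (q * (us - u)) - 1)).
Proof.
  intros Hu. rewrite f_factor. pose proof A_le_k0.
  assert (exp (- (p * (us - u))) <= 1) by (rewrite <- exp_0; apply exp_le_exp; nra).
  assert (exp 0 <= exp (q * (us - u))) by (apply exp_le_exp; nra).
  rewrite exp_0 in *. nra.
Qed.

Lemma f_le_lin_gap u : u <= us -> f u <= - (A * q) * (us - u).
Proof.
  intros Hu. pose proof (f_le_exp_gap u Hu). pose proof (exp_ineq1_le (q * (us - u))). nra.
Qed.

Lemma IP_close : Rabs (IP - Om) <= Om * p * us * exp (p * us).
Proof.
  pose proof Om_pos. pose proof IP_ge. pose proof IP_le. pose proof (exp_sub_1_le (p * us)).
  rewrite Rabs_pos_eq by lra.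
  assert (Om * (exp (p * us) - 1) <= Om * (p * us * exp (p * us)))
    by (apply Rmult_le_compat_l; lra).
  lra.
Qed.

Lemma IQ_relation : IQ = B / A * IP * exp (- ((p + q) * us)).
Proof.
  pose proof Om_pos. pose proof IP_ge. pose proof IQ_ge. pose proof lam_pos. pose proof mu_pos.
  replace ((p + q) * us) with (ln (mu / lam)) by (unfold us; field; lra).
  rewrite exp_Ropp, exp_ln by (apply Rdiv_lt_0_compat; lra).
  unfold mu, lam. field. repeat split; lra.
Qed.

Lemma IQ_close : Rabs (IQ - B / A * Om) <= B / A * Om * (p + q) * us.
Proof.
  pose proof Om_pos. pose proof IP_ge. pose proof IP_le. pose proof us_nonneg.
  assert (HBA : 0 < B / A) by (apply Rdiv_lt_0_compat; lra).
  assert (Hup : IQ <= B / A * Om).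
  { rewrite IQ_relation.
    assert (exp (- ((p + q) * us)) * exp (p * us) <= 1).
    { rewrite <- exp_plus, <- exp_0. apply exp_le_exp. nra. }
    assert (0 < exp (- ((p + q) * us))) by apply exp_pos.
    assert (IP * exp (- ((p + q) * us)) <= Om) by nra.
    replace (B / A * IP * exp (- ((p + q) * us))) with (B / A * (IP * exp (- ((p + q) * us))))
      by ring.
    apply Rmult_le_compat_l; lra. }
  assert (Hlo : B / A * Om * (1 - (p + q) * us) <= IQ).
  { rewrite IQ_relation. pose proof (exp_ineq1_le (- ((p + q) * us))).
    assert (0 < exp (- ((p + q) * us))) by apply exp_pos.
    assert (B / A * Om * (1 - (p + q) * us) <= B / A * Om * exp (- ((p + q) * us)))
      by (apply Rmult_le_compat_l; nra).
    assert (B / A * Om * exp (- ((p + q) * us)) <= B / A * IP * exp (- ((p + q) * us)))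
      by (apply Rmult_le_compat_r; [|apply Rmult_le_compat_l]; lra).
    lra. }
  rewrite Rabs_left1 by lra. lra.
Qed.

Lemma flux_pos : 0 < flux n Rr A B.
Proof. pose proof Om_pos. unfold flux. fold Om. nra. Qed.

Lemma coef_min_pos : 0 < coef_min n Rr gmin.
Proof. apply Rmult_lt_0_compat; [apply pow_lt|]; lra. Qed.

Lemma coef_max_pos : 0 < coef_max n Rr gmax.
Proof.
  destruct (Hg 0) as [H1 H2]; [lra|].
  apply Rmult_lt_0_compat; [apply pow_lt|]; lra.
Qed.

Lemma growth_rate_pos : 0 < growth_rate n Rr A q gmax.
Proof.
  pose proof coef_max_pos.
  apply Rdiv_lt_0_compat; [repeat apply Rmult_lt_0_compat; try apply pow_lt|]; lra.
Qed.

Lemma m_ge_coef_min x : Rr / 2 <= x <= Rr -> coef_min n Rr gmin <= m x.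
Proof.
  intros Hx. unfold coef_min, m. destruct (Hg x) as [Hgx _]; [lra|].
  apply Rmult_le_compat; try lra; [apply pow_le; lra|apply pow_incr; lra].
Qed.

Lemma w_ge x : Rr / 2 <= x -> (Rr / 2) ^ S n / eps ^ 2 <= w x.
Proof.
  intros Hx. unfold w, Rdiv. apply Rmult_le_compat_r.
  - apply Rlt_le, Rinv_0_lt_compat, pow_lt; lra.
  - apply pow_incr; lra.
Qed.

Hypotheses (Heps1 : eps <= exp (-1))
  (Heps_layer : eps <= Rr * flux n Rr A B / (2 * coef_min n Rr gmin)).

Lemma eps_lt_1 : eps < 1.
Proof. assert (exp (-1) < exp 0) by (apply exp_increasing; lra). rewrite exp_0 in *. lra. Qed.

Let L := ln (1 / eps).

Lemma L_ge_1 : 1 <= L.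
Proof.
  unfold L, Rdiv. rewrite Rmult_1_l, ln_Rinv by lra.
  assert (ln eps <= -1) by (apply exp_le_inv; rewrite exp_ln; lra). lra.
Qed.

(* Width of the boundary layer: there [U] drops by at most 1. *)
Let tau := eps ^ 2 * coef_min n Rr gmin / flux n Rr A B.

Lemma tau_pos : 0 < tau.
Proof.
  pose proof flux_pos. pose proof coef_min_pos.
  apply Rdiv_lt_0_compat; [apply Rmult_lt_0_compat; [apply pow_lt|]|]; lra.
Qed.

Lemma tau_le : tau <= Rr / 2.
Proof.
  pose proof flux_pos. pose proof coef_min_pos. pose proof eps_lt_1.
  unfold tau. apply Rle_trans with (eps * coef_min n Rr gmin / flux n Rr A B).
  - unfold Rdiv. apply Rmult_le_compat_r; [apply Rlt_le, Rinv_0_lt_compat; lra|].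
    apply Rmult_le_compat_r; [lra|]. simpl. nra.
  - apply Rmult_le_reg_r with (flux n Rr A B / coef_min n Rr gmin);
      [apply Rdiv_lt_0_compat; lra|].
    replace (eps * coef_min n Rr gmin / flux n Rr A B * (flux n Rr A B / coef_min n Rr gmin))
      with eps by (field; lra).
    replace (Rr / 2 * (flux n Rr A B / coef_min n Rr gmin))
      with (Rr * flux n Rr A B / (2 * coef_min n Rr gmin)) by (field; lra).
    exact Heps_layer.
Qed.

Lemma gap_layer_increment : us - U Rr <= us - U (Rr - tau) + 1.
Proof.
  pose proof tau_pos. pose proof tau_le. pose proof flux_pos. pose proof coef_min_pos.
  assert (Hdrop := U_drop_le_flux Rr U dU V m w f solution_radial_flux (Rr - tau)
    (coef_min n Rr gmin) ltac:(lra) coef_min_pos ltac:(intros; apply m_ge_coef_min; lra)).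
  replace (- V Rr / coef_min n Rr gmin * (Rr - (Rr - tau))) with 1 in Hdrop.
  - lra.
  - rewrite V_Rr. unfold tau. field. repeat split; lra.
Qed.

Lemma gap_layer_exp : exp (q * (us - U (Rr - tau))) <= (1 + layer_const n Rr A B gmin) / eps ^ 2.
Proof.
  pose proof tau_pos. pose proof tau_le. pose proof flux_pos. pose proof coef_min_pos.
  pose proof eps_lt_1.
  assert (0 < (Rr / 2) ^ S n) by (apply pow_lt; lra).
  assert (0 < eps ^ 2) by (apply pow_lt; lra).
  assert (Hw0 : 0 < (Rr / 2) ^ S n / eps ^ 2) by (apply Rdiv_lt_0_compat; lra).
  assert (Hlayer := flux_ge_layer Rr U dU V m w f solution_radial_flux (Rr - tau) _ ltac:(lra)
    (Rlt_le _ _ Hw0) ltac:(intros; apply w_ge; lra)).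
  assert (Hf := f_le_exp_gap (U (Rr - tau)) (U_le_us (Rr - tau) ltac:(lra))).
  rewrite V_Rr in Hlayer. replace (Rr - (Rr - tau)) with tau in Hlayer by ring.
  set (E := exp (q * (us - U (Rr - tau)))) in *.
  assert (Hc : (Rr / 2) ^ S n / eps ^ 2 * A * tau
    = (Rr / 2) ^ S n * A * coef_min n Rr gmin / flux n Rr A B) by (unfold tau; field; lra).
  assert (Hp0 : 0 < (Rr / 2) ^ S n * A * coef_min n Rr gmin / flux n Rr A B)
    by (apply Rdiv_lt_0_compat; [apply Rmult_lt_0_compat; [apply Rmult_lt_0_compat|]|]; lra).
  assert (HE : E - 1 <= layer_const n Rr A B gmin / eps ^ 2).
  { apply Rmult_le_reg_l with ((Rr / 2) ^ S n * A * coef_min n Rr gmin / flux n Rr A B); [lra|].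
    unfold layer_const.
    replace ((Rr / 2) ^ S n * A * coef_min n Rr gmin / flux n Rr A B *
      (flux n Rr A B ^ 2 / ((Rr / 2) ^ S n * A * coef_min n Rr gmin) / eps ^ 2))
      with (- - flux n Rr A B / eps ^ 2) by (field; repeat split; lra).
    rewrite <- Hc.
    assert ((Rr / 2) ^ S n / eps ^ 2 * (A * (E - 1)) * tau
      <= (Rr / 2) ^ S n / eps ^ 2 * - f (U (Rr - tau)) * tau)
      by (apply Rmult_le_compat_r; [|apply Rmult_le_compat_l]; lra).
    lra. }
  assert (eps ^ 2 <= 1) by (simpl; nra).
  assert (1 <= 1 / eps ^ 2) by (apply Rmult_le_reg_l with (eps ^ 2); [|field_simplify]; lra).
  replace ((1 + layer_const n Rr A B gmin) / eps ^ 2)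
    with (1 / eps ^ 2 + layer_const n Rr A B gmin / eps ^ 2) by (field; lra).
  lra.
Qed.

Lemma gap_at_boundary : us - U Rr <= gap_const n Rr A B q gmin * L.
Proof.
  pose proof gap_layer_increment. pose proof gap_layer_exp. pose proof L_ge_1.
  assert (HC8 : 0 <= layer_const n Rr A B gmin).
  { pose proof coef_min_pos. apply Rdiv_le_0_compat; [apply pow2_ge_0|].
    repeat apply Rmult_lt_0_compat; try apply pow_lt; lra. }
  set (C8 := layer_const n Rr A B gmin) in *.
  assert (Hln : 0 <= ln (1 + C8)) by (rewrite <- ln_1; apply ln_le; lra).
  assert (HqD : q * (us - U (Rr - tau)) <= ln (1 + C8) + 2 * L).
  { assert (Hinv : 0 < 1 / eps) by (apply Rdiv_lt_0_compat; lra).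
    apply exp_le_inv. eapply Rle_trans; [eassumption|].
    rewrite exp_plus, exp_ln by lra. unfold L.
    replace (2 * ln (1 / eps)) with (ln ((1 / eps) ^ 2)) by (rewrite ln_pow by lra; simpl; ring).
    rewrite exp_ln by (apply pow_lt; lra).
    right. field. lra. }
  unfold gap_const. fold C8.
  assert (us - U (Rr - tau) <= ln (1 + C8) / q + 2 / q * L).
  { apply Rmult_le_reg_l with q; [lra|].
    replace (q * (ln (1 + C8) / q + 2 / q * L)) with (ln (1 + C8) + 2 * L) by (field; lra). lra. }
  assert (ln (1 + C8) / q <= ln (1 + C8) / q * L).
  { assert (0 <= ln (1 + C8) / q) by (apply Rdiv_le_0_compat; lra). nra. }
  nra.
Qed.

Variables (kappa : R) (kk : nat).

Hypotheses (Hkappa : 0 < kappa < 1) (Hkk : (1 <= kk)%nat)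
  (Hkk_kappa : kappa <= INR kk * (2 - 2 * kappa))
  (Heps_kappa : exp (kappa * ln eps) <= Rr / 2).

Let ell := exp (kappa * ln eps).

Lemma gap_growth_interior r s : Rr / 2 <= r -> r < s -> s <= Rr ->
  (us - U r) * (1 + growth_rate n Rr A q gmax / eps ^ 2 * (s - r) ^ 2) <= us - U s.
Proof.
  intros Hr Hrs Hs.
  assert (0 < (Rr / 2) ^ S n) by (apply pow_lt; lra).
  assert (0 < eps ^ 2) by (apply pow_lt; lra).
  assert (HMm : forall x, 0 < x < Rr -> m x <= coef_max n Rr gmax).
  { intros x Hx. unfold m, coef_max. destruct (Hg x) as [Hg1 Hg2]; [lra|].
    apply Rmult_le_compat; try lra; [apply pow_le; lra|apply pow_incr; lra]. }
  assert (Hgrowth := gap_growth Rr U dU V m w f solution_radial_flux (Rr / 2)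
    ((Rr / 2) ^ S n / eps ^ 2) (coef_max n Rr gmax) us (A * q) ltac:(lra)
    ltac:(apply Rlt_le, Rdiv_lt_0_compat; lra) ltac:(nra) HMm
    ltac:(intros; apply w_ge; lra) U_le_us f_le_lin_gap r s Hr Hrs Hs).
  replace (growth_rate n Rr A q gmax / eps ^ 2) with
    ((Rr / 2) ^ S n / eps ^ 2 * (A * q) / (2 * coef_max n Rr gmax)).
  - exact Hgrowth.
  - pose proof coef_max_pos. unfold growth_rate. field. lra.
Qed.

(* [kk] steps of length [ell / kk] from [Rr - ell] to [Rr], each multiplying the gap by
   at least [growth_rate / kk^2 * eps^(2 kappa - 2)]. *)
Lemma gap_inner_scaled :
  (us - U (Rr - ell)) * ((growth_rate n Rr A q gmax / INR kk ^ 2) ^ kk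
    * exp (INR kk * (2 * (kappa - 1) * ln eps))) <= us - U Rr.
Proof.
  assert (Hell : 0 < ell) by apply exp_pos.
  assert (HkkR : 1 <= INR kk) by (apply (le_INR 1); lia).
  assert (Hell2 : ell <= Rr / 2) by exact Heps_kappa.
  pose proof growth_rate_pos.
  assert (0 < eps ^ 2) by (apply pow_lt; lra).
  assert (Hc0 : 0 <= growth_rate n Rr A q gmax / eps ^ 2) by (apply Rdiv_le_0_compat; lra).
  set (h := ell / INR kk).
  assert (Hh : 0 < h) by (apply Rdiv_lt_0_compat; lra).
  assert (Hit := growth_iterate (fun x => us - U x) _ (Rr / 2) Rr gap_growth_interior Hc0 kk h
    (Rr - ell) Hh ltac:(lra) ltac:(right; unfold h; field; lra)).
  replace (Rr - ell + INR kk * h) with Rr in Hit by (unfold h; field; lra).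
  assert (Hstep : growth_rate n Rr A q gmax / eps ^ 2 * h ^ 2
    = growth_rate n Rr A q gmax / INR kk ^ 2 * exp (2 * (kappa - 1) * ln eps)).
  { replace (2 * (kappa - 1) * ln eps) with (kappa * ln eps + kappa * ln eps + - (ln eps + ln eps))
      by ring.
    rewrite !exp_plus, exp_Ropp, exp_plus, exp_ln by lra. fold ell.
    unfold h. simpl. field. lra. }
  rewrite <- exp_pow, <- Rpow_mult_distr, <- Hstep.
  assert (0 <= us - U (Rr - ell)) by (pose proof (U_le_us (Rr - ell) ltac:(lra)); lra).
  eapply Rle_trans; [|exact Hit]. apply Rmult_le_compat_l; [lra|].
  apply pow_incr. pose proof (pow2_ge_0 h). split; [|lra]. apply Rmult_le_pos; lra.
Qed.

Lemma gap_inner :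
  us - U (Rr - ell) <= (us - U Rr) * iteration_const n Rr A q gmax kk * ell.
Proof.
  assert (Hell : 0 < ell) by apply exp_pos.
  assert (Hell2 : ell <= Rr / 2) by exact Heps_kappa.
  assert (HkkR : 1 <= INR kk) by (apply (le_INR 1); lia).
  pose proof growth_rate_pos. pose proof eps_lt_1.
  assert (0 <= us - U (Rr - ell)) by (pose proof (U_le_us (Rr - ell) ltac:(lra)); lra).
  assert (0 <= us - U Rr) by (pose proof (U_le_us Rr ltac:(lra)); lra).
  set (c := growth_rate n Rr A q gmax / INR kk ^ 2).
  assert (Hc : 0 < c) by (apply Rdiv_lt_0_compat; [|apply pow_lt]; lra).
  set (E := exp (INR kk * (2 * (kappa - 1) * ln eps))).
  assert (HE : 0 < E) by apply exp_pos.
  assert (HP : iteration_const n Rr A q gmax kk * c ^ kk = 1).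
  { unfold iteration_const, c. rewrite <- Rpow_mult_distr.
    replace (INR kk ^ 2 / growth_rate n Rr A q gmax * (growth_rate n Rr A q gmax / INR kk ^ 2))
      with 1 by (field; split; lra).
    apply pow1. }
  assert (HEell : / E <= ell).
  { unfold E, ell. rewrite <- exp_Ropp. apply exp_le_exp.
    assert (ln eps < 0) by (rewrite <- ln_1; apply ln_increasing; lra). nra. }
  assert (HPpos : 0 < iteration_const n Rr A q gmax kk)
    by (apply pow_lt, Rdiv_lt_0_compat; [apply pow_lt|]; lra).
  assert (Hs := gap_inner_scaled). fold c E in Hs.
  apply Rle_trans with ((us - U Rr) * iteration_const n Rr A q gmax kk * / E).
  - apply Rmult_le_reg_r with (c ^ kk * E); [apply Rmult_lt_0_compat; [apply pow_lt|]; lra|].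
    replace ((us - U Rr) * iteration_const n Rr A q gmax kk * / E * (c ^ kk * E))
      with ((us - U Rr) * (iteration_const n Rr A q gmax kk * c ^ kk)) by (field; lra).
    rewrite HP. lra.
  - apply Rmult_le_compat_l; [apply Rmult_le_pos|]; lra.
Qed.

Lemma us_le : us <= us_const n Rr A B q gmin gmax kk * ell * L.
Proof.
  assert (Hell : 0 < ell) by apply exp_pos.
  assert (Hell2 : ell <= Rr / 2) by exact Heps_kappa.
  pose proof Om_pos. pose proof gap_inner. pose proof gap_at_boundary. pose proof L_ge_1.
  assert (Hmean := weighted_mean_gap (S n) Rr U HR U_cont HUint us (Rr - ell) ltac:(lra) U_le_us
    (U_nonincreasing Rr U dU V m w f solution_radial_flux)).
  change (Rr ^ S (S n) / INR (S (S n))) with Om in Hmean.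
  replace (Rr - (Rr - ell)) with ell in Hmean by ring.
  assert (0 <= us - U (Rr - ell)) by (pose proof (U_le_us (Rr - ell) ltac:(lra)); lra).
  assert (0 <= us - U Rr) by (pose proof (U_le_us Rr ltac:(lra)); lra).
  assert (HPpos : 0 < iteration_const n Rr A q gmax kk)
    by (pose proof growth_rate_pos; apply pow_lt, Rdiv_lt_0_compat;
        [apply pow_lt, lt_0_INR|]; try lia; lra).
  set (P := iteration_const n Rr A q gmax kk) in *.
  assert (Hmid : (Rr - ell) * (us - U (Rr - ell)) + ell * (us - U Rr)
    <= (Rr * P + 1) * ell * (gap_const n Rr A B q gmin * L)).
  { assert ((Rr - ell) * (us - U (Rr - ell)) <= Rr * ((us - U Rr) * P * ell))
      by (apply Rmult_le_compat; lra).
    assert (0 <= Rr * P) by (apply Rmult_le_pos; lra).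
    assert ((Rr * P + 1) * ell * (us - U Rr)
      <= (Rr * P + 1) * ell * (gap_const n Rr A B q gmin * L))
      by (apply Rmult_le_compat_l; [apply Rmult_le_pos|]; lra).
    nra. }
  apply Rmult_le_reg_r with Om; [lra|].
  unfold us_const. fold P. fold Om.
  replace (Rr ^ S n * (Rr * P + 1) * gap_const n Rr A B q gmin / Om * ell * L * Om)
    with (Rr ^ S n * ((Rr * P + 1) * ell * (gap_const n Rr A B q gmin * L))) by (field; lra).
  eapply Rle_trans; [exact Hmean|].
  apply Rmult_le_compat_l; [apply pow_le; lra|exact Hmid].
Qed.

Lemma integral_deviation :
  Rabs (Ip (S (S n)) Rr p U - Rr ^ S (S n) / INR (S (S n)))
  + Rabs (Iq (S (S n)) Rr q U - B * Rr ^ S (S n) / (A * INR (S (S n))))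
  <= deviation_const n Rr A B p q gmin gmax kk kappa * Rpower eps kappa * ln (1 / eps).
Proof.
  pose proof Om_pos. pose proof us_nonneg. pose proof us_le. pose proof L_ge_1.
  pose proof (exp_mul_ln_le kappa eps ltac:(lra) Heps) as HellL. fold ell L in HellL.
  assert (Hell : 0 < ell) by apply exp_pos.
  set (C13 := us_const n Rr A B q gmin gmax kk) in *.
  assert (HC13 : 0 <= C13) by (apply Rmult_le_reg_r with (ell * L); nra).
  assert (Hus : us <= C13 / kappa).
  { apply Rle_trans with (C13 * (ell * L)); [rewrite <- Rmult_assoc; assumption|].
    unfold Rdiv. apply Rmult_le_compat_l; [lra|]. lra. }
  assert (HEE : exp (p * us) <= exp (p * (C13 / kappa))) by (apply exp_le_exp; nra).
  assert (HBA : 0 < B / A) by (apply Rdiv_lt_0_compat; lra).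
  change (Rr ^ S (S n) / INR (S (S n))) with Om.
  replace (B * Rr ^ S (S n) / (A * INR (S (S n)))) with (B / A * Om)
    by (unfold Om, radial_volume; field; split; [apply not_0_INR; lia|lra]).
  unfold Rpower, deviation_const. fold Om C13 ell L.
  pose proof IP_close. pose proof IQ_close. fold IP IQ.
  set (K := Om * p * exp (p * (C13 / kappa)) + B / A * Om * (p + q)).
  assert (HK : 0 <= K).
  { unfold K. apply Rplus_le_le_0_compat.
    - apply Rmult_le_pos; [apply Rmult_le_pos|left; apply exp_pos]; lra.
    - apply Rmult_le_pos; [apply Rmult_le_pos|]; lra. }
  apply Rle_trans with (K * us).
  - assert (Om * p * us * exp (p * us) <= Om * p * us * exp (p * (C13 / kappa)))
      by (apply Rmult_le_compat_l; [apply Rmult_le_pos; [apply Rmult_le_pos|]|]; lra).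
    unfold K. nra.
  - rewrite Rmult_assoc, Rmult_assoc. apply Rmult_le_compat_l; [lra|].
    rewrite <- Rmult_assoc. assumption.
Qed.

End Solution.

Lemma cont_Icc_of_continuity_pt h a b : a <= b ->
  (forall x, a <= x <= b -> continuity_pt h x) -> cont_Icc a b h.
Proof.
  intros Hab Hc x. apply (continuity_pt_comp (clamp a b) h x).
  - apply continuity_pt_clamp, Hab.
  - apply Hc, clamp_in, Hab.
Qed.

Lemma smooth_closed_is_derive g a b : smooth_closed a b g ->
  forall x, a <= x <= b -> is_derive g x (Derive g x).
Proof.
  intros [d [Hd Hg]] x Hx. apply Derive_correct. exact (Hg 1%nat x ltac:(lra)).
Qed.

Lemma smooth_closed_continuity_pt g a b : smooth_closed a b g ->
  forall x, a <= x <= b -> continuity_pt g x.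
Proof.
  intros Hg x Hx. apply continuity_pt_filterlim.
  exact (ex_derive_continuous (K := R_AbsRing) (V := R_NormedModule) g x
    (ex_intro _ _ (smooth_closed_is_derive g a b Hg x Hx))).
Qed.

Lemma smooth_closed_cont_Icc g a b : a <= b -> smooth_closed a b g -> cont_Icc a b g.
Proof.
  intros Hab Hg. exact (cont_Icc_of_continuity_pt g a b Hab (smooth_closed_continuity_pt g a b Hg)).
Qed.

Lemma smooth_closed_pos_bounds g a b : a <= b -> smooth_closed a b g ->
  (forall x, Icc a b x -> 0 < g x) ->
  exists gmin gmax, 0 < gmin /\ forall x, a <= x <= b -> gmin <= g x <= gmax.
Proof.
  intros Hab Hg Hpos. pose proof (smooth_closed_continuity_pt g a b Hg) as Hc.
  destruct (continuity_ab_min g a b Hab Hc) as [xm [Hm Hxm]].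
  destruct (continuity_ab_maj g a b Hab Hc) as [xM [HM HxM]].
  exists (g xm), (g xM). split; [apply Hpos; exact Hxm|]. intros x Hx. split; auto.
Qed.

Lemma exists_step_count kappa : 0 < kappa < 1 ->
  exists kk, (1 <= kk)%nat /\ kappa <= INR kk * (2 - 2 * kappa).
Proof.
  intros Hk.
  destruct (archimed_cor1 ((2 - 2 * kappa) / kappa)) as [kk [Hkk1 Hkk2]];
    [apply Rdiv_lt_0_compat; lra|].
  exists kk. split; [lia|].
  assert (HkkR : 0 < INR kk) by (apply lt_0_INR; lia).
  apply Rmult_lt_compat_l with (r := kappa) in Hkk1; [|lra].
  replace (kappa * ((2 - 2 * kappa) / kappa)) with (2 - 2 * kappa) in Hkk1 by (field; lra).
  apply Rmult_le_reg_r with (/ INR kk); [apply Rinv_0_lt_compat; lra|].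
  replace (INR kk * (2 - 2 * kappa) * / INR kk) with (2 - 2 * kappa) by (field; lra).
  lra.
Qed.

Lemma small_eps_exists kappa c Rr : 0 < kappa -> 0 < c -> 0 < Rr ->
  exists eps0, 0 < eps0 /\ forall eps, 0 < eps < eps0 ->
    eps <= exp (-1) /\ eps <= c /\ exp (kappa * ln eps) <= Rr / 2.
Proof.
  intros Hk Hc HR.
  set (e := exp (ln (Rr / 2) / kappa)).
  exists (Rmin (exp (-1)) (Rmin c e)). split.
  { apply Rmin_pos; [apply exp_pos|apply Rmin_pos; [lra|apply exp_pos]]. }
  intros eps [He Heps].
  pose proof (Rmin_l (exp (-1)) (Rmin c e)). pose proof (Rmin_r (exp (-1)) (Rmin c e)).
  pose proof (Rmin_l c e). pose proof (Rmin_r c e).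
  split; [lra|split; [lra|]].
  rewrite <- (exp_ln (Rr / 2)) by lra. apply exp_le_exp.
  assert (Hl : ln eps <= ln (Rr / 2) / kappa) by (apply exp_le_inv; rewrite exp_ln; fold e; lra).
  apply Rmult_le_compat_l with (r := kappa) in Hl; [|lra].
  replace (kappa * (ln (Rr / 2) / kappa)) with (ln (Rr / 2)) in Hl by (field; lra).
  exact Hl.
Qed.

Lemma Rpower_mul_ln_inv_nonneg eps kappa : 0 < eps <= 1 ->
  0 <= Rpower eps kappa * ln (1 / eps).
Proof.
  intros He. apply Rmult_le_pos; [left; apply exp_pos|].
  unfold Rdiv. rewrite Rmult_1_l, ln_Rinv by lra.
  assert (ln eps <= 0) by (rewrite <- ln_1; apply ln_le; lra). lra.
Qed.

Theorem lemma3p9 :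
  forall (N : nat) (Rr A B p q : R) (g : R -> R) (U : R -> R -> R),
    (2 <= N)%nat -> 0 < Rr ->
    smooth_closed 0 Rr g -> (forall x, Icc 0 Rr x -> 0 < g x) ->
    0 < A -> A < B -> 0 < p -> 0 < q ->
    (forall eps, 0 < eps -> solves_Nstar N Rr A B p q g eps (U eps)) ->
    forall kappa, 0 < kappa < 1 ->
      exists C, 0 < C /\
        exists eps0, 0 < eps0 /\
          forall eps, 0 < eps < eps0 ->
            Rabs (Ip N Rr p (U eps) - Rr ^ N / INR N)
            + Rabs (Iq N Rr q (U eps) - B * Rr ^ N / (A * INR N))
            <= C * Rpower eps kappa * ln (1 / eps).
Proof.
  intros N Rr A B p q g U HN HR Hsmooth Hgpos HA HAB Hp Hq Hsol kappa Hk.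
  destruct N as [|[|n]]; try lia.
  destruct (smooth_closed_pos_bounds g 0 Rr ltac:(lra) Hsmooth Hgpos)
    as [gmin [gmax [Hgmin Hg]]].
  destruct (exists_step_count kappa Hk) as [kk [Hkk Hkk_kappa]].
  destruct (small_eps_exists kappa (Rr * flux n Rr A B / (2 * coef_min n Rr gmin)) Rr)
    as [eps0 [Heps0 Hsmall]]; try lra.
  { assert (0 < flux n Rr A B) by (apply flux_pos; lra).
    assert (0 < coef_min n Rr gmin) by (apply coef_min_pos; lra).
    apply Rdiv_lt_0_compat; nra. }
  set (C := deviation_const n Rr A B p q gmin gmax kk kappa).
  exists (Rabs C + 1). split; [pose proof (Rabs_pos C); lra|].
  exists eps0. split; [exact Heps0|]. intros eps Heps.
  destruct (Hsmall eps Heps) as [Heps1 [Heps_layer Heps_kappa]].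
  destruct (Hsol eps (proj1 Heps)) as [[dU [HdU [_ HdUR]]] [Hsm [Hode HUint]]].
  assert (Hgd : forall x, 0 < x < Rr -> is_derive g x (Derive g x))
    by (intros x Hx; apply (smooth_closed_is_derive g 0 Rr Hsmooth); lra).
  pose proof (smooth_closed_cont_Icc g 0 Rr ltac:(lra) Hsmooth) as Hgc.
  eapply Rle_trans.
  { exact (integral_deviation n Rr A B p q eps gmin gmax g (U eps) dU HR HA HAB Hp Hq
      (proj1 Heps) Hg Hgmin Hgd Hgc HdU HdUR Hsm Hode HUint Heps1 Heps_layer kappa kk Hk Hkk
      Hkk_kappa Heps_kappa). }
  assert (exp (-1) <= 1) by (rewrite <- exp_0; apply exp_le_exp; lra).
  pose proof (Rpower_mul_ln_inv_nonneg eps kappa ltac:(split; lra)).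
  fold C. rewrite !Rmult_assoc. apply Rmult_le_compat_r; [assumption|].
  pose proof (Rle_abs C). lra.
Qed.
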